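(* Let $(X,T,Y)$ be a random triple as described in the context, let $\psi$ be a score variable satisfying Assumption 1, and let $\mathcal G=\{g_\theta:\theta\in\Theta\}$ be a parametrized class of utility functions. Suppose the policy class is correctly specified for the surrogate loss, in the sense that $$\mathcal G\cap\Big(\operatorname*{argmin}_{g\ \text{unconstrained}}\mathbb E\big[|\psi|\, l(g(X),\operatorname{sign}(\psi))\big]\Big)\neq\varnothing,$$ where the argmin ranges over all measurable functions $g:\mathcal X\to\mathbb R$. Then every minimizer of the surrogate-loss risk is an optimal policy: for all $\theta^*\in\operatorname*{argmin}_{\theta\in\Theta}L(\theta)$, $$J(\theta^* )=\max_{\pi\ \text{unconstrained}}J(\pi),$$ where the maximum ranges over all measurable policies $\pi:\mathcal X\to\{-1,+1\}$.
   Context: $X$ is a context taking values in a space $\mathcal X$, $T\in\{-1,1\}$ is a treatment, $Y\in\mathbb R$ is an outcome, and $Y(-1),Y(1)$ are potential outcomes with $Y=Y(T)$ and $Y(t)\perp T\mid X$ for each $t$. A score variable $\psi$ is a real-valued random variable depending on observables. Assumption 1: $\mathbb E[\psi\mid X]=\mathbb E[Y(1)-Y(-1)\mid X]$ almost surely and $\mathbb E[|\psi|]<\infty$. For a policy $\pi:\mathcal X\to\{-1,+1\}$, $J(\pi)=\mathbb E[\pi(X)(Y(1)-Y(-1))]$. $\Theta\subseteq\mathbb R^d$, each $g_\theta:\mathcal X\to\mathbb R$ is measurable, and $J(\theta)=J(\operatorname{sign}(g_\theta(\cdot)))=\mathbb E[\operatorname{sign}(g_\theta(X))(Y(1)-Y(-1))]$.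 The surrogate (logistic) loss is $l(g,s)=2\log(1+\exp(g))-(s+1)g$ for $g\in\mathbb R$, $s\in\{-1,1\}$, and the population surrogate risk is $L(\theta)=\mathbb E[|\psi|\, l(g_\theta(X),\operatorname{sign}(\psi))]$. *)

From HB Require Import structures.
From mathcomp Require Import all_boot all_order all_algebra.
From mathcomp Require Import all_classical all_reals all_analysis.
Set Implicit Arguments. Unset Strict Implicit. Unset Printing Implicit Defensive.
Import Order.TTheory GRing.Theory Num.Theory.
Import numFieldNormedType.Exports.
Local Open Scope classical_set_scope.
Local Open Scope ring_scope.

Section Defs.
Context {R : realType}.

(* sign convention: sign(0) = +1, so that sign takes values in {-1,+1} *)
Definition sgn (x : R) : R := if 0 <= x then 1 else -1.

Definition lsur (g s : R) : R := 2 * ln (1 + expR g) - (s + 1) * g.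

Context {d0 : measure_display} {Omega : measurableType d0}
        (P : probability Omega R)
        {d1 : measure_display} {Xsp : measurableType d1}.

Definition surrisk (X : Omega -> Xsp) (psi : Omega -> R) (g : Xsp -> R) : \bar R :=
  (\int[P]_w (`|psi w| * lsur (g (X w)) (sgn (psi w)))%:E)%E.

Definition policy (pi : Xsp -> R) : Prop :=
  measurable_fun setT pi /\ (forall x, pi x = 1 \/ pi x = -1).

Definition Jpol (X : Omega -> Xsp) (Y1 Ym1 : Omega -> R) (pi : Xsp -> R) : \bar R :=
  (\int[P]_w (pi (X w) * (Y1 w - Ym1 w))%:E)%E.

(* E[U | X] = E[V | X] a.s. (for integrable U, V): equality of integrals
   over every event {X in C}, C measurable *)
Definition condexp_eq (X : Omega -> Xsp) (U V : Omega -> R) : Prop :=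
  forall C : set Xsp, measurable C ->
    (\int[P]_(w in X @^-1` C) (U w)%:E = \int[P]_(w in X @^-1` C) (V w)%:E)%E.

(* conditional independence U _||_ V | X : for all Borel A, B there are
   versions p, q of P(U in A | X), P(V in B | X) whose product is a version
   of P(U in A, V in B | X) *)
Definition cond_indep (X : Omega -> Xsp) (U V : Omega -> R) : Prop :=
  forall A B : set R, measurable A -> measurable B ->
  exists p q : Xsp -> R, measurable_fun setT p /\ measurable_fun setT q /\
    forall C : set Xsp, measurable C ->
      [/\ P (X @^-1` C `&` U @^-1` A) = (\int[P]_(w in X @^-1` C) (p (X w))%:E)%E,
          P (X @^-1` C `&` V @^-1` B) = (\int[P]_(w in X @^-1` C) (q (X w))%:E)%E &
          P (X @^-1` C `&` U @^-1` A `&` V @^-1` B)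
            = (\int[P]_(w in X @^-1` C) (p (X w) * q (X w))%:E)%E].

End Defs.

From HB Require Import structures.
From mathcomp Require Import all_boot all_order all_algebra.
From mathcomp Require Import all_classical all_reals all_analysis measurable_realfun.
From mathcomp Require Import ring lra.
Import Order.TTheory GRing.Theory Num.Theory.
Import numFieldNormedType.Exports.
Local Open Scope classical_set_scope.
Local Open Scope ring_scope.

(* Let G be a minimizer of the surrogate risk over all measurable functions:
   by correct specification any minimizer over Theta is one. Perturbing G by
   t 1_C for a measurable C, the second-order bound
   l(g + t, s) <= l(g, s) + t (2 sigma(g) - s - 1) + 4 t^2 of the logistic loss
   turns minimality into 0 <= t a + t^2 b for small |t|, so the first-order
   coefficient a vanishes: psi and |psi| (2 sigma(G(X)) - 1) have the same
   integral over every event {X in C}. By Assumption 1 the latter is then a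
   version of E[Y(1) - Y(-1) | X], so J(pi) = E[pi(X) |psi| (2 sigma(G(X)) - 1)]
   for every policy, and this is maximized pointwise by pi = sign G since
   2 sigma(G) - 1 has the sign of G. *)

Lemma linear_coef_eq0 {R : realFieldType} (a b e : R) : 0 < e ->
  (forall t, `|t| <= e -> 0 <= t * a + t ^+ 2 * b) -> a = 0.
Proof.
move=> e0 H; have [//|a0] := eqVneq a 0; exfalso.
(* Test [t = - a / K] with [K > |a| / e + |b|]: then [t a + t^2 b = a^2 (b - K) / K^2 < 0]. *)
pose K := `|a| / e + `|b| + 1.
have hK : `|a| / e + `|b| < K by rewrite /K ltrDl.
have K0 : 0 < K by apply: le_lt_trans hK; rewrite addr_ge0 ?divr_ge0 // ltW.
have aK : `|a| / e <= K by have := normr_ge0 b; lra.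
have ht : `|- a / K| <= e.
  rewrite normrM normrN normfV (gtr0_norm K0) ler_pdivrMr //.
  by rewrite mulrC -ler_pdivrMr.
have := H _ ht.
have -> : - a / K * a + (- a / K) ^+ 2 * b = a ^+ 2 / K ^+ 2 * (b - K).
  by field; rewrite gt_eqF.
have a2 : 0 < a ^+ 2 by rewrite exprn_even_gt0.
rewrite pmulr_rge0; last by rewrite divr_gt0 // exprn_gt0.
have := ler_norm b; have := divr_ge0 (normr_ge0 a) (ltW e0); lra.
Qed.

Section LogisticLoss.
Context {R : realType}.
Implicit Types g s t : R.

Definition logistic g : R := expR g / (1 + expR g).

Lemma logistic_ge0 g : 0 <= logistic g.
Proof. by rewrite divr_ge0 // ltW // ?addr_gt0 ?expR_gt0. Qed.

Lemma logistic_le1 g : logistic g <= 1.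
Proof. by rewrite ler_pdivrMr ?mul1r ?lerDr // addr_gt0 ?expR_gt0. Qed.

Lemma normr_2logisticB1 g : `|2 * logistic g - 1| <= 1.
Proof. by have := logistic_ge0 g; have := logistic_le1 g; rewrite ler_norml; lra. Qed.

Lemma logisticE g : logistic g = expR (g - ln (1 + expR g)).
Proof. by rewrite expRD expRN lnK // posrE addr_gt0 // expR_gt0. Qed.

Lemma measurable_logistic : measurable_fun setT logistic.
Proof.
rewrite (funext logisticE); apply: measurableT_comp => //.
apply: measurable_funB => //; apply: measurableT_comp => //.
exact: measurable_funD.
Qed.

Lemma measurable_sgn : measurable_fun setT (@sgn R).
Proof. by apply: measurable_fun_ifT => //; exact: measurable_fun_ler. Qed.

Lemma sgn_pm1 g : sgn g = 1 \/ sgn g = -1.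
Proof. by rewrite /sgn; case: ifP; [left|right]. Qed.

Lemma normr_mul_sgn g : `|g| * sgn g = g.
Proof.
rewrite /sgn; case: ifPn => [/ger0_norm->|]; first by rewrite mulr1.
by rewrite -ltNge mulrN1 => /ltr0_norm->; rewrite opprK.
Qed.

Lemma lsur_ge0 g s : s = 1 \/ s = -1 -> 0 <= lsur g s.
Proof.
have h1 : 0 <= ln (1 + expR g) by rewrite ln_ge0 // lerDl ltW ?expR_gt0.
have h2 : g <= ln (1 + expR g).
  by rewrite -{1}(expRK g) ler_ln ?posrE ?addr_gt0 ?expR_gt0 // lerDr.
by rewrite /lsur => -[] ->; lra.
Qed.

(* [expR (- t) >= 1 - t] gives [expR t * (1 - t) <= 1], and
   [(1 - t) * (1 + t + 2 t^2) = 1 + t^2 (1 - 2 t) >= 1]. *)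
Lemma expR_le_quadratic t : t <= 1/2 -> expR t <= 1 + t + 2 * t ^+ 2.
Proof.
move=> ht.
have e0 := expR_gt0 t.
have eN : expR t * expR (- t) = 1 by rewrite -expRD subrr expR0.
have h1 := expR_ge1Dx (- t).
have : expR t * (1 - t) <= 1 by nra.
nra.
Qed.

Lemma ln1DexpR_shift_le g t :
  ln (1 + expR (g + t)) <= ln (1 + expR g) + logistic g * (expR t - 1).
Proof.
have eg := expR_gt0 g; have et := expR_gt0 t.
have ratioE : (1 + expR (g + t)) / (1 + expR g) = 1 + logistic g * (expR t - 1).
  by rewrite /logistic expRD; field; lra.
rewrite -lerBlDl -ln_div ?posrE ?addr_gt0 ?expR_gt0 // ratioE le_ln1Dx //.
have := logistic_ge0 g; have := logistic_le1 g; nra.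
Qed.

Lemma lsur_shift_le g t s : t <= 1/2 ->
  lsur (g + t) s <= lsur g s + t * (2 * logistic g - s - 1) + 4 * t ^+ 2.
Proof.
move=> ht.
have hl := ln1DexpR_shift_le g t; have hq := expR_le_quadratic t ht.
have s0 := logistic_ge0 g; have s1 := logistic_le1 g.
have t2 : 0 <= t ^+ 2 := sqr_ge0 t.
have : logistic g * (expR t - 1) <= logistic g * t + 2 * t ^+ 2 by nra.
rewrite /lsur; lra.
Qed.

Lemma weighted_lsur_shift_le p g t : t <= 1/2 ->
  `|p| * lsur (g + t) (sgn p) <=
  `|p| * lsur g (sgn p) + t * (`|p| * (2 * logistic g - 1) - p) + t ^+ 2 * (4 * `|p|).
Proof.
move=> ht; have := ler_wpM2l (normr_ge0 p) (lsur_shift_le g t (sgn p) ht).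
have := normr_mul_sgn p; nra.
Qed.

Lemma sgn_logistic_max p g : p = 1 \/ p = -1 ->
  p * (2 * logistic g - 1) <= sgn g * (2 * logistic g - 1).
Proof.
move=> hp.
have e := expR_gt0 g.
have hs : logistic g * (1 + expR g) = expR g.
  by rewrite /logistic divfK // gt_eqF // addr_gt0.
rewrite /sgn; case: ifPn => hg.
  have e1 : 1 <= expR g by rewrite -expR0 ler_expR.
  by case: hp => ->; nra.
have e1 : expR g < 1 by rewrite expR_lt1 ltNge.
by case: hp => ->; nra.
Qed.

End LogisticLoss.

Section IntegralTools.
Context {d} {T : measurableType d} {R : realType} {mu : {measure set T -> \bar R}}.

Lemma EFin_Rintegral D (f : T -> R) : measurable D ->
  mu.-integrable D (EFin \o f) ->
  (\int[mu]_(x in D) f x)%:E = (\int[mu]_(x in D) (f x)%:E)%E.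
Proof. by move=> mD /(integrable_fin_num mD) /fineK. Qed.

Lemma integrable_dominated (c : R) {g f : T -> R} :
  mu.-integrable setT (EFin \o g) -> measurable_fun setT f ->
  (forall x, `|f x| <= c * `|g x|) -> mu.-integrable setT (EFin \o f).
Proof.
move=> /integrable_abse/(integrableZl measurableT c) ig mf fg.
apply: (le_integrable measurableT _ _ ig) => [|x _]; first exact/measurable_EFinP.
by rewrite /= lee_fin (le_trans (fg x)) // ler_norm.
Qed.

Lemma integrableM_bounded1 (U k : T -> R) :
  mu.-integrable setT (EFin \o U) -> measurable_fun setT k ->
  (forall x, `|k x| <= 1) -> mu.-integrable setT (EFin \o (fun x => U x * k x)).
Proof.
move=> iU mk k1; apply: (integrable_dominated 1 iU) => [|x].
  by apply: measurable_funM mk; exact/measurable_EFinP/(measurable_int _ iU).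
by rewrite normrM mul1r ler_piMr.
Qed.

Lemma normr_indic_le1 {U : Type} (C : set U) (x : U) : `|\1_C x : R| <= 1.
Proof. by rewrite /indic; case: (_ \in _); rewrite ?normr0 ?normr1. Qed.

Context {d'} {U : measurableType d'}.

Lemma integral_preimage_indic (X : T -> U) (f : T -> R) (C : set U) :
  (\int[mu]_(w in X @^-1` C) (f w)%:E = \int[mu]_w (f w * \1_C (X w))%:E)%E.
Proof.
rewrite integral_mkcond; apply: eq_integral => w _.
rewrite /patch /indic; have -> : (w \in X @^-1` C) = (X w \in C) by [].
by case: (X w \in C); rewrite ?mulr1 ?mulr0.
Qed.

End IntegralTools.

Section PolicyValue.
Context {R : realType} {d0 : measure_display} {Omega : measurableType d0}
  (P : probability Omega R) {d1 : measure_display} {Xsp : measurableType d1}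
  (X : Omega -> Xsp).
Hypothesis mX : measurable_fun setT X.
Implicit Types pi : Xsp -> R.

Lemma policy_sgn (G : Xsp -> R) : measurable_fun setT G -> policy (fun x => sgn (G x)).
Proof. by move=> mG; split=> [|x]; [exact: measurableT_comp measurable_sgn mG | exact: sgn_pm1]. Qed.

Lemma measurable_policy_level pi c : policy pi -> measurable (pi @^-1` [set c]).
Proof. by move=> [mpi _]; rewrite -[_ @^-1` _]setTI; exact: mpi. Qed.

Lemma policy_indicE pi x : policy pi ->
  pi x = \1_(pi @^-1` [set 1]) x - \1_(pi @^-1` [set -1]) x.
Proof.
move=> [_ /(_ x) pix].
have levelE c : (x \in pi @^-1` [set c]) = (pi x == c).
  by apply/idP/eqP => [/set_mem|/mem_set].
have N1 : ((-1 : R) == 1) = false by apply/eqP; lra.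
by rewrite !indicE !levelE; case: pix => ->; rewrite eqxx ?N1 ?[1 == -1]eq_sym ?N1 /=; lra.
Qed.

Lemma integrable_policyM pi (U : Omega -> R) : policy pi ->
  P.-integrable setT (EFin \o U) ->
  P.-integrable setT (EFin \o (fun w => pi (X w) * U w)).
Proof.
move=> [mpi pi_pm] iU; apply: (integrable_dominated 1 iU) => [|w].
  apply: measurable_funM; first exact: measurableT_comp mpi mX.
  exact/measurable_EFinP/(measurable_int _ iU).
by rewrite normrM mul1r; case: (pi_pm (X w)) => ->; rewrite ?normrN normr1 mul1r.
Qed.

Lemma integral_policy pi (U : Omega -> R) : policy pi ->
  P.-integrable setT (EFin \o U) ->
  (\int[P]_w (pi (X w) * U w)%:E =
   \int[P]_(w in X @^-1` (pi @^-1` [set 1%R])) (U w)%:E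
   - \int[P]_(w in X @^-1` (pi @^-1` [set (-1)%R])) (U w)%:E)%E.
Proof.
move=> hpi iU.
have iUlevel c : P.-integrable setT
    (EFin \o (fun w => U w * \1_(pi @^-1` [set c]) (X w))).
  apply: integrableM_bounded1 iU _ (fun w => normr_indic_le1 _ _).
  exact: measurableT_comp (@measurable_indic _ _ R setT _ (measurable_policy_level _ c hpi)) mX.
rewrite !integral_preimage_indic -integralB_EFin //; apply: eq_integral => w _.
by rewrite (policy_indicE _ (X w) hpi) -EFinB mulrBl mulrC [in X in _ - X]mulrC.
Qed.

Lemma integral_policy_condexp pi (U V : Omega -> R) : policy pi ->
  condexp_eq P X U V ->
  P.-integrable setT (EFin \o U) -> P.-integrable setT (EFin \o V) ->
  (\int[P]_w (pi (X w) * U w)%:E = \int[P]_w (pi (X w) * V w)%:E)%E.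
Proof.
move=> hpi UV iU iV.
by rewrite !integral_policy // !UV //; exact: measurable_policy_level.
Qed.

End PolicyValue.

Section SurrogateRisk.
Context {R : realType} {d0 : measure_display} {Omega : measurableType d0}
  (P : probability Omega R) {d1 : measure_display} {Xsp : measurableType d1}
  (X : Omega -> Xsp) (psi : Omega -> R).
Hypotheses (mX : measurable_fun setT X) (ipsi : P.-integrable setT (EFin \o psi)).

Definition surloss (h : Xsp -> R) (w : Omega) : R :=
  `|psi w| * lsur (h (X w)) (sgn (psi w)).

Lemma measurable_psi : measurable_fun setT psi.
Proof. exact/measurable_EFinP/(measurable_int _ ipsi). Qed.

Lemma integrable_abs_psi : P.-integrable setT (EFin \o (fun w => `|psi w|)).
Proof. exact: integrable_abse ipsi. Qed.

Lemma measurable_surloss h : measurable_fun setT h ->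
  measurable_fun setT (surloss h).
Proof.
move=> mh; apply: measurable_funM; first exact: measurableT_comp measurable_psi.
have msgn := measurableT_comp (@measurable_sgn R) measurable_psi.
have mhX := measurableT_comp mh mX.
apply: measurable_funB; apply: measurable_funM => //; last exact: measurable_funD.
apply: measurableT_comp (@measurable_ln R) _.
exact/measurable_funD/(measurableT_comp (@measurable_expR R) mhX).
Qed.

Lemma surloss_ge0 h w : 0 <= surloss h w.
Proof. by rewrite mulr_ge0 // lsur_ge0 //; exact: sgn_pm1. Qed.

Lemma integrable_surloss h : measurable_fun setT h ->
  (surrisk P X psi h < +oo)%E -> P.-integrable setT (EFin \o surloss h).
Proof.
move=> mh lty; apply/integrableP; split; first exact/measurable_EFinP/measurable_surloss.
rewrite (eq_integral (fun w => (surloss h w)%:E)) // => w _.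
by rewrite /= ger0_norm // surloss_ge0.
Qed.

Lemma surrisk_cst0_lty : (surrisk P X psi (fun=> 0%R) < +oo)%E.
Proof.
apply: (integrable_lty measurableT).
apply: (eq_integrable measurableT (fun w => (2 * ln (1 + expR 0))%:E * `|psi w|%:E)%E).
  by move=> w _; rewrite /lsur mulr0 subr0 -EFinM mulrC.
exact/integrableZl/integrable_abs_psi.
Qed.

Variable G : Xsp -> R.
Hypotheses (mG : measurable_fun setT G)
  (Gmin : forall h, measurable_fun setT h -> (surrisk P X psi G <= surrisk P X psi h)%E).

Lemma integrable_surloss_min : P.-integrable setT (EFin \o surloss G).
Proof.
apply: integrable_surloss => //; apply: le_lt_trans surrisk_cst0_lty.
exact/Gmin/measurable_cst.
Qed.

Definition score_fit (w : Omega) : R := `|psi w| * (2 * logistic (G (X w)) - 1).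

Lemma measurable_score_fit : measurable_fun setT score_fit.
Proof.
apply: measurable_funM; first exact: measurableT_comp measurable_psi.
apply: measurable_funB => //; apply: measurable_funM => //.
exact: measurableT_comp measurable_logistic (measurableT_comp mG mX).
Qed.

Lemma normr_score_fit_le w : `|score_fit w| <= `|psi w|.
Proof. by rewrite normrM normr_id ler_piMr // normr_2logisticB1. Qed.

Lemma integrable_score_fit : P.-integrable setT (EFin \o score_fit).
Proof.
apply: (integrable_dominated 1 ipsi) => [|w].
  exact: measurable_score_fit.
by rewrite mul1r normr_score_fit_le.
Qed.

Lemma surloss_perturb_le (C : set Xsp) t w : t <= 1/2 ->
  surloss (fun x => G x + t * \1_C x) w <=
  surloss G w + t * (score_fit w * \1_C (X w) - psi w * \1_C (X w))
    + t ^+ 2 * (4 * `|psi w| * \1_C (X w)).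
Proof.
move=> ht; rewrite /surloss /score_fit indicE.
case: (X w \in C); rewrite ?mulr1n ?mulr0n ?mulr1; last by rewrite !(mulr0, addr0, subr0).
exact: weighted_lsur_shift_le.
Qed.

Section Perturbation.
Variable C : set Xsp.
Hypothesis mC : measurable C.

Let mind : measurable_fun setT (fun w => \1_C (X w) : R).
Proof. exact: measurableT_comp (@measurable_indic _ _ R setT C mC) mX. Qed.

Let mperturb t : measurable_fun setT (fun x => G x + t * \1_C x).
Proof. exact/measurable_funD/measurable_funM/measurable_indic. Qed.

Let ifitC : P.-integrable setT (EFin \o (fun w => score_fit w * \1_C (X w))).
Proof. exact: integrableM_bounded1 integrable_score_fit mind (fun w => normr_indic_le1 C (X w)). Qed.

Let ipsiC : P.-integrable setT (EFin \o (fun w => psi w * \1_C (X w))).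
Proof. exact: integrableM_bounded1 ipsi mind (fun w => normr_indic_le1 C (X w)). Qed.

Let islope : P.-integrable setT
  (EFin \o (fun w => score_fit w * \1_C (X w) - psi w * \1_C (X w))).
Proof.
apply: (integrable_dominated 2 ipsi) => [|w].
  by apply: measurable_funB; apply: measurable_funM mind;
    [exact: measurable_score_fit | exact: measurable_psi].
rewrite -mulrBl normrM (le_trans (ler_piMr _ (normr_indic_le1 _ _))) //.
by apply: le_trans (ler_normB _ _) _; have := normr_score_fit_le w; lra.
Qed.

Let icurv : P.-integrable setT (EFin \o (fun w => 4 * `|psi w| * \1_C (X w))).
Proof.
apply: (integrable_dominated 4 ipsi) => [|w].
  apply: measurable_funM mind; apply: measurable_funM => //.
  exact: measurableT_comp measurable_psi.
by rewrite normrM [`|4 * _|]ger0_norm ?mulr_ge0 // ler_piMr ?mulr_ge0 // normr_indic_le1.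
Qed.

Lemma surrisk_perturb_le (t : R) : t <= 1/2 ->
  (surrisk P X psi (fun x => G x + t * \1_C x)%R <=
   (\int[P]_w surloss G w
    + t * \int[P]_w (score_fit w * \1_C (X w) - psi w * \1_C (X w))
    + t ^+ 2 * \int[P]_w (4 * `|psi w| * \1_C (X w)))%:E)%E.
Proof.
move=> ht; have iG := integrable_surloss_min.
have itslope := integrableZl measurableT t islope.
have itcurv := integrableZl measurableT (t ^+ 2) icurv.
have iGslope := integrableD measurableT iG itslope.
have iRHS := integrableD measurableT iGslope itcurv.
rewrite !EFinD (EFinM t) (EFinM (t ^+ 2)) !EFin_Rintegral //.
rewrite -(integralZl measurableT islope) -(integralZl measurableT icurv).
rewrite -integralD // -integralD //.
apply: ge0_le_integral => //.
- by move=> w _; rewrite lee_fin; exact: (surloss_ge0 (fun x => G x + t * \1_C x)).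
- by apply/measurable_EFinP; exact: measurable_surloss (mperturb t).
- exact: measurable_int iRHS.
- by move=> w _; rewrite /= -!EFinM -!EFinD lee_fin; exact: surloss_perturb_le.
Qed.

(* Minimality of [G] against [G + t 1_C] gives [0 <= t a + t^2 b] for
   [|t| <= 1/2], where [a] is the difference of the two integrals. *)
Lemma integral_indic_psi_score_fit :
  (\int[P]_w (psi w * \1_C (X w))%:E = \int[P]_w (score_fit w * \1_C (X w))%:E)%E.
Proof.
rewrite -!EFin_Rintegral //; congr EFin; apply/eqP; rewrite eq_sym -subr_eq0 -RintegralB //.
apply/eqP/(@linear_coef_eq0 _ _ (\int[P]_w (4 * `|psi w| * \1_C (X w))) (1/2)) => // t.
rewrite ler_norml => /andP[_ ht].
have := le_trans (Gmin _ (mperturb t)) (surrisk_perturb_le t ht).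
rewrite -[surrisk _ _ _ G]/(\int[P]_w (surloss G w)%:E)%E -EFin_Rintegral //.
  by rewrite lee_fin; lra.
exact: integrable_surloss_min.
Qed.

End Perturbation.

Lemma score_fit_condexp : condexp_eq P X psi score_fit.
Proof.
move=> C mC; rewrite !integral_preimage_indic.
exact: integral_indic_psi_score_fit.
Qed.

Lemma integral_policy_score_fit_le pi : policy pi ->
  (\int[P]_w (pi (X w) * score_fit w)%:E
     <= \int[P]_w (sgn (G (X w)) * score_fit w)%:E)%E.
Proof.
move=> hpi; apply: le_integral => //.
- exact: (integrable_policyM P X mX _ _ hpi integrable_score_fit).
- exact: (integrable_policyM P X mX _ _ (policy_sgn _ mG) integrable_score_fit).
move=> w _; rewrite lee_fin /score_fit mulrCA [leRHS]mulrCA ler_wpM2l //.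
by apply: sgn_logistic_max; case: hpi => _; apply.
Qed.

End SurrogateRisk.

Theorem theorem1 (R : realType)
  (d0 : measure_display) (Omega : measurableType d0) (P : probability Omega R)
  (d1 : measure_display) (Xsp : measurableType d1)
  (X : Omega -> Xsp) (T Y Y1 Ym1 psi : Omega -> R)
  (* psi is a measurable function of the observables (X, T, Y) *)
  (f : (Xsp * R * R)%type -> R)
  (d : nat) (Theta : set 'rV[R]_d) (g : 'rV[R]_d -> Xsp -> R) :
  measurable_fun setT X -> measurable_fun setT T -> measurable_fun setT Y ->
  measurable_fun setT Y1 -> measurable_fun setT Ym1 ->
  (forall w, T w = 1 \/ T w = -1) ->
  (forall w, Y w = (if T w == 1 then Y1 w else Ym1 w)) ->
  cond_indep P X Y1 T -> cond_indep P X Ym1 T ->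
  measurable_fun setT f -> (forall w, psi w = f (X w, T w, Y w)) ->
  P.-integrable setT (fun w => (Y1 w - Ym1 w)%:E) ->
  (* Assumption 1 *)
  P.-integrable setT (fun w => (psi w)%:E) ->
  condexp_eq P X psi (fun w => Y1 w - Ym1 w) ->
  (forall th, measurable_fun setT (g th)) ->
  (* correct specification: G meets the unconstrained argmin *)
  (exists2 th0, Theta th0 &
     forall h : Xsp -> R, measurable_fun setT h ->
       (surrisk P X psi (g th0) <= surrisk P X psi h)%E) ->
  forall th_star, Theta th_star ->
    (forall th, Theta th -> (surrisk P X psi (g th_star) <= surrisk P X psi (g th))%E) ->
    Jpol P X Y1 Ym1 (fun x => sgn (g th_star x))
      = ereal_sup [set Jpol P X Y1 Ym1 pi | pi in [set pi | policy pi]].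
Proof.
move=> mX _ _ _ _ _ _ _ _ _ _ iD ipsi psi_cate mg [th0 Th0 th0_min] th _ th_min.
have mG := mg th.
have Gmin h : measurable_fun setT h -> (surrisk P X psi (g th) <= surrisk P X psi h)%E.
  by move=> mh; apply: le_trans (th_min _ Th0) (th0_min _ mh).
have cate_fit : condexp_eq P X (fun w => Y1 w - Ym1 w) (score_fit X psi (g th)).
  by move=> C mC; rewrite -psi_cate // (score_fit_condexp P X psi mX ipsi _ mG Gmin).
have J_fit pi : policy pi ->
    Jpol P X Y1 Ym1 pi = (\int[P]_w (pi (X w) * score_fit X psi (g th) w)%:E)%E.
  move=> hpi; apply: (integral_policy_condexp P X mX) hpi cate_fit iD _.
  exact: integrable_score_fit.
have sgn_policy := policy_sgn _ mG.
apply/le_anti/andP; split; first by apply: ereal_sup_ubound; exists (fun x => sgn (g th x)).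
apply: ge_ereal_sup => _ [pi hpi <-]; rewrite !J_fit //.
exact: integral_policy_score_fit_le.
Qed.
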